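(* For every agent $i$ and every measurable $q_i:[0,1]\to[0,1]$, letting $r_i=\int_0^1q_i(x)\,dx$ and $H_i(t)=F_{i,0}(2\kappa t)$, \[ \int_0^1 q_i(x)\,F_{i,x}^{-1}(1-q_i(x))\,dx\ \le\ r_i\,F_{i,0}^{-1}(1-r_i)\ =\ 2\kappa\, r_i\,H_i^{-1}(1-r_i). \]
   Context: Agent $i$ has a valuation $v_i:[0,1]\to\mathbb{R}_{\ge0}$ drawn from a distribution $\mathcal F_i$; almost surely $v_i$ is non-decreasing, concave and differentiable on $[0,1]$ (one-sided derivatives at endpoints); $\kappa\ge1$ is a fixed constant. For $x\in[0,1]$, $F_{i,x}$ is the cdf of $v_i'(x)$ for $v_i\sim\mathcal F_i$, and $F^{-1}(s)=\inf\{t:F(t)\ge s\}$ denotes the quantile function of a cdf $F$ (convention $0\cdot F^{-1}(1)=0$). Regularity assumption: $q\mapsto q\,F_{i,0}^{-1}(1-q)$ is concave on $[0,1]$. *)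

From HB Require Import structures.
From mathcomp Require Import all_boot all_order all_algebra.
From mathcomp Require Import all_classical all_reals all_analysis.
Set Implicit Arguments. Unset Strict Implicit. Unset Printing Implicit Defensive.
Import Order.TTheory GRing.Theory Num.Theory.
Import numFieldNormedType.Exports.
Local Open Scope classical_set_scope.
Local Open Scope ring_scope.

Section Defs.
Variable R : realType.

Definition nondecr01 (v : R -> R) : Prop :=
  forall x y, 0 <= x -> x <= y -> y <= 1 -> v x <= v y.

Definition concave01 (v : R -> R) : Prop :=
  forall x y l, 0 <= x <= 1 -> 0 <= y <= 1 -> 0 <= l <= 1 ->
    l * v x + (1 - l) * v y <= v (l * x + (1 - l) * y).

(* difference-quotient filter at x, increments restricted to stay in [0,1]
   (so at the endpoints this is the one-sided derivative) *)
Definition dq01 (v : R -> R) (x : R) : set_system R :=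
  (fun h : R => h^-1 * (v (x + h) - v x)) @
     within (fun h : R => h != 0 /\ 0 <= x + h <= 1) (nbhs (0 : R)).

Definition has_deriv01 (v : R -> R) (x l : R) : Prop := dq01 v x --> l.

Definition differentiable01 (v : R -> R) : Prop :=
  forall x, 0 <= x <= 1 -> exists l, has_deriv01 v x l.

Definition deriv01 (v : R -> R) (x : R) : R := lim (dq01 v x).

Definition good_valuation (v : R -> R) : Prop :=
  (forall x, 0 <= x <= 1 -> 0 <= v x) /\ nondecr01 v /\ concave01 v /\
  differentiable01 v.

Definition cdfR d (T : measurableType d) (P : probability T R) (X : T -> R)
  (t : R) : R := fine (P [set w | X w <= t]).

Definition Fder d (T : measurableType d) (P : probability T R)
  (V : T -> R -> R) (x : R) : R -> R :=
  cdfR P (fun w => deriv01 (V w) x).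

(* quantile F^{-1}(s) = inf {t | F t >= s}, extended-real valued
   (inf of the empty set is +oo) *)
Definition quantile (F : R -> R) (s : R) : \bar R :=
  ereal_inf [set t%:E | t in [set t : R | s <= F t]].

(* q |-> q * F^{-1}(1 - q) is concave on [0,1] (extended-real arithmetic,
   with 0 * (+-oo) = 0) *)
Definition regular (F : R -> R) : Prop :=
  forall a b l, 0 <= a <= 1 -> 0 <= b <= 1 -> 0 <= l <= 1 ->
   ((l * a + (1 - l) * b)%:E * quantile F (1 - (l * a + (1 - l) * b)) >=
    l%:E * (a%:E * quantile F (1 - a)) +
    (1 - l)%:E * (b%:E * quantile F (1 - b)))%E.

End Defs.

From HB Require Import structures.
From mathcomp Require Import all_boot all_order all_algebra.
From mathcomp Require Import all_classical all_reals all_analysis.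
From mathcomp Require Import ring lra measurable_realfun.
Import Order.TTheory GRing.Theory Num.Theory.
Import numFieldNormedType.Exports.
Set Implicit Arguments. Unset Strict Implicit. Unset Printing Implicit Defensive.
Local Open Scope classical_set_scope.
Local Open Scope ring_scope.

(* 1. Chord slopes of a concave function decrease from left to right; hence the
      one-sided derivative of a concave differentiable v on [0, 1] is
      nonincreasing, so v'(x) <= v'(0) for almost every valuation v.
   2. A pointwise larger distribution function has a smaller quantile, so
      F_x^{-1} <= F_0^{-1}, and the integrand is bounded by G(q(x)) where
      G(s) = s F_0^{-1}(1 - s) is concave by the regularity assumption.
   3. Jensen's inequality for this extended-real concave G on [0, 1]
      (G(0) = 0, G finite on ]0, 1[ because cdfs cross every level in ]0, 1[,
      G(1) = -oo) bounds the integral of G(q) by G(r): for 0 < r < 1 integrate a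
      supporting line of G at r; for r = 0 (resp. r = 1), q = 0 (resp. q = 1)
      almost everywhere.
   4. The equality is a change of scale inside the quantile of H. *)

Section concave_slopes.
Variable R : realType.

Definition slope (v : R -> R) (a b : R) : R := (v b - v a) / (b - a).

Lemma slopeC (v : R -> R) a b : slope v a b = slope v b a.
Proof. by rewrite /slope -opprB -[b - a]opprB invrN mulrNN. Qed.

Lemma concave_slopes (v : R -> R) a b c :
  (forall l, 0 <= l <= 1 -> l * v a + (1 - l) * v c <= v (l * a + (1 - l) * c)) ->
  a < b -> b < c -> slope v b c <= slope v a c <= slope v a b.
Proof.
move=> hv ab bc.
have [l [l01 e1 e2 eb]] : exists l, [/\ 0 <= l <= 1, (c - a) * l = c - b,
    (c - a) * (1 - l) = b - a & l * a + (1 - l) * c = b].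
  exists ((c - b) / (c - a)); split.
  - by rewrite divr_ge0 ?ler_pdivrMr /=; lra.
  - by rewrite mulrC divfK //; lra.
  - by field; lra.
  - by field; lra.
have chord : (c - b) * v a + (b - a) * v c <= (c - a) * v b.
  have ca : 0 <= c - a by lra.
  by have := ler_wpM2l ca (hv l l01); rewrite mulrDr !mulrA e1 e2 eb.
have [ca cb ba] : [/\ 0 < c - a, 0 < c - b & 0 < b - a] by split; lra.
rewrite /slope; apply/andP; split;
  by rewrite ler_pdivlMr // mulrAC ler_pdivrMr //; nra.
Qed.

Lemma concave01_slopes (v : R -> R) a b c : concave01 v ->
  0 <= a -> a < b -> b < c -> c <= 1 -> slope v b c <= slope v a c <= slope v a b.
Proof.
move=> hv a0 ab bc c1; apply: concave_slopes => // l l01.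
by apply: hv => //; apply/andP; split; lra.
Qed.

End concave_slopes.

Section one_sided_derivative.
Variable R : realType.

Definition incr01 (x : R) : set R := fun h => h != 0 /\ 0 <= x + h <= 1.

Lemma incr01_proper x :
  0 <= x <= 1 -> ProperFilter (within (incr01 x) (nbhs (0 : R))).
Proof.
move=> x01; apply: within_nbhs_proper => B /nbhs_ballP [e /= e0 eB].
pose t := Num.min (e / 2) (1 / 2).
have t0 : 0 < t by rewrite lt_min; apply/andP; split; lra.
have te : t < e by rewrite gt_min; apply/orP; left; lra.
have t1 : t <= 1 / 2 by rewrite ge_min lexx orbT.
have [x_small|x_large] := lerP x (1 / 2).
  exists t; split; first by split; [rewrite gt_eqF | apply/andP; split]; lra.
  by apply: eB; rewrite /ball /= sub0r normrN gtr0_norm.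
exists (- t); split; first by split; [rewrite oppr_eq0 gt_eqF | apply/andP; split]; lra.
by apply: eB; rewrite /ball /= sub0r opprK gtr0_norm.
Qed.

Lemma dq01_slope (v : R -> R) x h :
  h != 0 -> h^-1 * (v (x + h) - v x) = slope v x (x + h).
Proof. by move=> h0; rewrite /slope addrAC subrr add0r mulrC. Qed.

Lemma deriv01_le (v : R -> R) x m : 0 <= x <= 1 ->
  (exists l, has_deriv01 v x l) ->
  (\forall h \near (0 : R), incr01 x h -> slope v x (x + h) <= m) ->
  deriv01 v x <= m.
Proof.
move=> x01 [l hl] hm; apply: (@limr_le _ _ (incr01_proper x01)).
  exact: cvgP hl.
by apply: filterS hm => h hm [h0 hxh]; rewrite dq01_slope //; apply: hm.
Qed.

Lemma deriv01_ge (v : R -> R) x m : 0 <= x <= 1 ->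
  (exists l, has_deriv01 v x l) ->
  (\forall h \near (0 : R), incr01 x h -> m <= slope v x (x + h)) ->
  m <= deriv01 v x.
Proof.
move=> x01 [l hl] hm; apply: (@limr_ge _ _ (incr01_proper x01)).
  exact: cvgP hl.
by apply: filterS hm => h hm [h0 hxh]; rewrite dq01_slope //; apply: hm.
Qed.

(* The derivative of a concave differentiable function on [0, 1] is
   nonincreasing: v'(x) <= slope of the chord [y, x] <= v'(y). *)
Lemma deriv01_antitone (v : R -> R) x y : concave01 v -> differentiable01 v ->
  0 <= y -> y <= x -> x <= 1 -> deriv01 v x <= deriv01 v y.
Proof.
move=> hc hd y0 yx x1.
have [->|ne_yx] := eqVneq y x; first exact: lexx.
have {ne_yx yx} yx : y < x by rewrite lt_neqAle ne_yx.
have near0 : \forall h \near (0 : R), `|h| < x - y by apply: nbhs0_lt; lra.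
have [x01 y01] : 0 <= x <= 1 /\ 0 <= y <= 1 by split; apply/andP; split; lra.
apply: (@le_trans _ _ (slope v y x)).
  apply: deriv01_le => //; first exact: hd.
  apply: filterS near0 => h /ltr_normlP[hl hr] [h0 /andP[_ h1]].
  have [hneg|hpos] : h < 0 \/ 0 < h by move: h0; rewrite neq_lt => /orP.
    have [<-|ne_y] := eqVneq y (x + h); first by rewrite slopeC.
    have [lt_y lt_x] : y < x + h /\ x + h < x by rewrite lt_neqAle ne_y; lra.
    by have /andP[+ _] := concave01_slopes hc y0 lt_y lt_x x1; rewrite slopeC.
  have lt_x : x < x + h by lra.
  have /andP[+ +] := concave01_slopes hc y0 yx lt_x h1.
  exact: le_trans.
apply: deriv01_ge => //; first exact: hd.
apply: filterS near0 => h /ltr_normlP[hl hr] [h0 /andP[h1 _]].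
have [hneg|hpos] : h < 0 \/ 0 < h by move: h0; rewrite neq_lt => /orP.
  have lt_y : y + h < y by lra.
  have /andP[+ +] := concave01_slopes hc h1 lt_y yx x1.
  by rewrite [slope v (y + h) y]slopeC; apply: le_trans.
have [lt_y lt_x] : y < y + h /\ y + h < x by lra.
by have /andP[_] := concave01_slopes hc y0 lt_y lt_x x1.
Qed.

End one_sided_derivative.

Section quantiles.
Variable R : realType.

Lemma quantile_antitone (F G : R -> R) s :
  (forall t, F t <= G t) -> (quantile G s <= quantile F s)%E.
Proof.
move=> FG; apply: ereal_inf_le_tmp; apply: image_subset => t /=.
by move/le_trans; apply.
Qed.

Lemma quantile_scale (F : R -> R) (k s : R) : 0 < k ->
  quantile F s = (k%:E * quantile (fun t => F (k * t)%R) s)%E.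
Proof.
move=> k0; rewrite /quantile -ereal_inf_pZl //; congr ereal_inf.
apply/seteqP; split.
  move=> _ [t /= ht <-]; exists (t / k)%:E.
    by exists (t / k) => //=; rewrite mulrC divfK // gt_eqF.
  by rewrite -EFinM mulrC divfK // gt_eqF.
by move=> _ [_ [t /= ht <-] <-]; exists (k * t).
Qed.

Lemma quantile0 (F : R -> R) : (forall t, 0 <= F t) -> quantile F 0 = -oo%E.
Proof.
move=> F0; rewrite /quantile -ereal_inf_real; congr ereal_inf.
by apply/seteqP; split => _ [t ht <-]; exists t => //=.
Qed.

Lemma quantile_fin_num (F : R -> R) s t0 t1 : {homo F : a b / a <= b} ->
  F t1 < s -> s <= F t0 -> quantile F s \is a fin_num.
Proof.
move=> Fmono Ft1 Ft0; apply: fin_real; apply/andP; split.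
  apply: (@lt_le_trans _ _ t1%:E); first exact: ltNyr.
  apply: le_ereal_inf_tmp => _ [t /= ht <-]; rewrite lee_fin leNgt.
  by apply/negP => /ltW/Fmono; lra.
apply: (@le_lt_trans _ _ t0%:E); last exact: ltry.
by apply: ereal_inf_lbound; exists t0.
Qed.

End quantiles.

Section distribution_functions.
Context d (T : measurableType d) (R : realType) (P : probability T R).

Lemma measurable_le_set (X : T -> R) t :
  measurable_fun setT X -> measurable [set w | X w <= t].
Proof.
move=> mX; rewrite (_ : [set w | _] = setT `&` X @^-1` `]-oo, t]).
  by apply: mX => //; exact: measurable_itv.
by apply/seteqP; split => w /=; rewrite in_itv /=; [move=> ->|case].
Qed.

Lemma cdfR_ge0 (X : T -> R) t : 0 <= cdfR P X t.
Proof. exact/fine_ge0/measure_ge0. Qed.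

Lemma cdfR_le_ae (X Y : T -> R) t :
  measurable_fun setT X -> measurable_fun setT Y ->
  {ae P, forall w, X w <= Y w} -> cdfR P Y t <= cdfR P X t.
Proof.
move=> mX mY [N [mN PN sub]]; have mXt := measurable_le_set t mX.
have mYt := measurable_le_set t mY.
apply: fine_le; rewrite ?fin_num_measure //.
apply: (@le_trans _ _ (P ([set w | X w <= t] `|` N))).
  apply: le_measure; rewrite ?inE //; first exact: measurableU.
  move=> w /= Ywt; have [XY|notXY] := pselect (X w <= Y w).
    by left; apply: le_trans Ywt.
  by right; apply: sub.
apply: le_trans (measureU2 _ mXt mN) _; rewrite le_eqVlt -[X in _ == X]adde0.
by apply/orP; left; apply/eqP; congr (_ + _).
Qed.

Section cdf_of_measurable_function.
Variables (X : T -> R) (mX : measurable_fun setT X).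

Let XRV : {RV P >-> R} := HB.pack X (isMeasurableFun.Build _ _ _ _ X mX).

Lemma cdfRE t : (cdfR P X t)%:E = cdf XRV t.
Proof.
rewrite /cdfR fineK; last exact/fin_num_measure/measurable_le_set.
by rewrite /cdf /distribution /pushforward.
Qed.

Lemma cdfR_nondecreasing : {homo cdfR P X : a b / a <= b}.
Proof. by move=> a b ab; rewrite -lee_fin !cdfRE; exact: cdf_nondecreasing. Qed.

(* Since the cdf tends to 0 at -oo and to 1 at +oo, it crosses every level
   strictly between 0 and 1. *)
Lemma cdfR_crosses s : 0 < s < 1 ->
  exists t0 t1, cdfR P X t1 < s /\ s <= cdfR P X t0.
Proof.
move=> /andP[s0 s1].
have [t0 ht0] : exists t0 : R, (s%:E < cdf XRV t0)%E.
  have s1E : (s%:E < 1)%E by rewrite lte_fin.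
  have near_oo : \forall t \near +oo%R, (s%:E < cdf XRV t)%E.
    by move: (cvg_cdfy1 XRV (open_ereal_gt' s1E)); rewrite nbhs_filterE.
  exact: filter_ex near_oo.
have [t1 ht1] : exists t1 : R, (cdf XRV t1 < s%:E)%E.
  have s0E : (0 < s%:E)%E by rewrite lte_fin.
  have near_Noo : \forall t \near -oo%R, (cdf XRV t < s%:E)%E.
    by move: (cvg_cdfNy0 XRV (open_ereal_lt' s0E)); rewrite nbhs_filterE.
  exact: filter_ex near_Noo.
by exists t0, t1; rewrite -lte_fin -lee_fin !cdfRE ht1 ltW.
Qed.

Lemma quantile_cdfR_fin_num s : 0 < s < 1 -> quantile (cdfR P X) s \is a fin_num.
Proof.
move=> s01; have [t0 [t1 [ht1 ht0]]] := cdfR_crosses s01.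
exact: quantile_fin_num cdfR_nondecreasing ht1 ht0.
Qed.

End cdf_of_measurable_function.
End distribution_functions.

Section supporting_lines.
Variable R : realType.

(* A function concave on [a, b[ has a supporting line at each interior point r;
   its slope is the infimum of the slopes of the chords ending at r from the left. *)
Lemma concave_support_line (g : R -> R) a b r :
  (forall s t l, a <= s < b -> a <= t < b -> 0 <= l <= 1 ->
     l * g s + (1 - l) * g t <= g (l * s + (1 - l) * t)) ->
  a < r < b -> exists c, forall s, a <= s < b -> g s <= g r + c * (s - r).
Proof.
move=> hg /andP[ar rb].
have slopes s t : a <= s < r -> r < t < b -> slope g r t <= slope g s r.
  move=> /andP[sa sr] /andP[rt tb].
  have hs : a <= s < b by apply/andP; split; lra.
  have ht : a <= t < b by apply/andP; split; lra.
  have /andP[+ +] := concave_slopes (fun l => hg s t l hs ht) sr rt.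
  exact: le_trans.
pose E := [set slope g s r | s in [set s | a <= s < r]].
have Elb : lbound E (slope g r ((r + b) / 2)).
  by move=> _ [s /= hs <-]; apply: slopes => //; apply/andP; split; lra.
have Ene : E !=set0 by exists (slope g a r); exists a => //=; apply/andP; split; lra.
exists (inf E) => s /andP[sa sb].
have [sr|rs|->] := ltgtP s r; last by rewrite subrr mulr0 addr0.
- have : inf E <= slope g s r.
    by apply: ge_inf; [exists (slope g r ((r + b) / 2)) | exists s => //=; apply/andP].
  by rewrite /slope ler_pdivlMr ?subr_gt0 //; nra.
- have : slope g r s <= inf E.
    by apply: lb_le_inf => // _ [u /= hu <-]; apply: slopes => //; apply/andP.
  by rewrite /slope ler_pdivrMr ?subr_gt0 //; nra.
Qed.

Definition concave01_ext (G : R -> \bar R) : Prop :=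
  forall a b l, 0 <= a <= 1 -> 0 <= b <= 1 -> 0 <= l <= 1 ->
    (l%:E * G a + (1 - l)%:E * G b <= G (l * a + (1 - l) * b)%R)%E.

Lemma concave01_ext_support (G : R -> \bar R) r : concave01_ext G ->
  G 0 = 0%E -> (forall s, 0 < s < 1 -> G s \is a fin_num) -> G 1 = -oo%E ->
  0 < r < 1 ->
  exists c, forall s, 0 <= s <= 1 -> (G s <= (fine (G r) + c * (s - r))%:E)%E.
Proof.
move=> hG G0 Gfin G1 r01.
have GE s : 0 <= s < 1 -> G s = (fine (G s))%:E.
  move=> /andP[s0 s1]; rewrite fineK //.
  have [->|sn0] := eqVneq s 0; first by rewrite G0.
  by apply: Gfin; rewrite s1 andbT lt_neqAle eq_sym sn0.
have concave_fine s t l : 0 <= s < 1 -> 0 <= t < 1 -> 0 <= l <= 1 ->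
    l * fine (G s) + (1 - l) * fine (G t) <= fine (G (l * s + (1 - l) * t)).
  move=> hs ht hl; have hst : 0 <= l * s + (1 - l) * t < 1.
    move: hs ht hl => /andP[s0 s1] /andP[t0 t1] /andP[l0 l1].
    apply/andP; split; first nra.
    have [->|ne1] := eqVneq l 1; first lra.
    have lt1 : l < 1 by rewrite lt_neqAle ne1.
    nra.
  rewrite -lee_fin EFinD !EFinM -!GE //.
  by apply: hG => //; move: hs ht => /andP[? ?] /andP[? ?]; apply/andP; split; lra.
have [c hc] := concave_support_line concave_fine r01.
exists c => s /andP[s0 s1].
have [->|ne1] := eqVneq s 1; first by rewrite G1 leNye.
by rewrite GE ?lee_fin ?hc //; apply/andP; split => //; rewrite lt_neqAle ne1.
Qed.

End supporting_lines.

Section integral_monotone.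
Local Open Scope ereal_scope.

(* Monotonicity of the integral for arbitrary (not necessarily measurable)
   integrands, read off the definition through positive and negative parts. *)
Lemma le_integral_pointwise d (T : measurableType d) (R : realType)
  (mu : {measure set T -> \bar R}) (D : set T) (f g : T -> \bar R) :
  (forall x, D x -> f x <= g x) ->
  \int[mu]_(x in D) f x <= \int[mu]_(x in D) g x.
Proof.
move=> fg; rewrite /integral; apply: leeB.
- apply: ereal_sup_le => _ [h hh <-]; exists h => //= x; apply: le_trans (hh x) _.
  rewrite !funeposE !patchE; case: ifPn => // /set_mem /fg fgx.
  by rewrite ge_max !le_max fgx lexx !orbT.
- apply: ereal_sup_le => _ [h hh <-]; exists h => //= x; apply: le_trans (hh x) _.
  rewrite !funenegE !patchE; case: ifPn => // /set_mem /fg fgx.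
  by rewrite ge_max !le_max leeN2 fgx lexx !orbT.
Qed.

End integral_monotone.

Section mean_of_unit_interval_valued.
Context d (T : measurableType d) (R : realType) (mu : {measure set T -> \bar R}).
Variables (D : set T) (q : T -> R).
Hypotheses (mD : measurable D) (muD : mu D = 1%E).
Hypotheses (mq : measurable_fun D q) (q01 : forall x, D x -> 0 <= q x <= 1).

Lemma integral_cst_unit (c : \bar R) : (\int[mu]_(_ in D) c = c)%E.
Proof. by have := integral_cst mu mD c; rewrite muD mule1. Qed.

Lemma integrable_bounded (g : T -> R) M : measurable_fun D g ->
  (forall x, D x -> `|g x| <= M) -> mu.-integrable D (EFin \o g).
Proof.
move=> mg gM; apply: measurable_bounded_integrable => //; first by rewrite muD ltry.
exists M; split; first exact: num_real.
by move=> M' MM' x Dx; apply: le_trans (gM x Dx) (ltW MM').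
Qed.

Local Notation mean := (\int[mu]_(x in D) (q x)%:E)%E.

Lemma mean_unit : 0 <= fine mean <= 1 /\ mean = (fine mean)%:E.
Proof.
have mean0 : (0 <= mean)%E.
  by apply: integral_ge0 => x /q01 /andP[q0 _]; rewrite lee_fin.
have mean1 : (mean <= 1)%E.
  rewrite -(integral_cst_unit 1%E); apply: le_integral_pointwise => x /q01/andP[_ q1].
  by rewrite lee_fin.
have meanE : mean = (fine mean)%:E by rewrite fineK // ge0_fin_numE // (le_lt_trans mean1) ?ltry.
by split => //; rewrite -!lee_fin -meanE mean0 mean1.
Qed.

Lemma integral_affine (a c : R) :
  (\int[mu]_(x in D) (a + c * q x)%:E = (a + c * fine mean)%:E)%E.
Proof.
have iq : mu.-integrable D (EFin \o q).
  by apply: (integrable_bounded (M := 1)) => // x /q01/andP[q0 q1]; rewrite ger0_norm.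
have ia : mu.-integrable D (EFin \o cst a).
  by apply: (integrable_bounded (M := `|a|)) => //; exact: measurable_cst.
under eq_integral do rewrite EFinD EFinM.
rewrite integralD //; last exact: integrableZl.
rewrite integral_cst_unit integralZl // {1}(proj2 mean_unit).
by rewrite -EFinM -EFinD.
Qed.

Lemma ae_zero_of_integral0 (g : T -> R) : measurable_fun D g ->
  (forall x, D x -> 0 <= g x) -> (\int[mu]_(x in D) (g x)%:E = 0)%E ->
  ae_eq mu D (EFin \o g) (cst 0%E).
Proof.
move=> mg g0 ig0; apply/ae_eq_integral_abs => //; first exact/measurable_EFinP.
by rewrite -ig0; apply: eq_integral => x /set_mem /g0 gx0; rewrite /= ger0_norm.
Qed.

End mean_of_unit_interval_valued.

Section jensen_concave01.
Context d (T : measurableType d) (R : realType) (mu : {measure set T -> \bar R}).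
Variables (D : set T) (q : T -> R) (G : R -> \bar R) (f : T -> \bar R).
Hypotheses (mD : measurable D) (muD : mu D = 1%E).
Hypotheses (mq : measurable_fun D q) (q01 : forall x, D x -> 0 <= q x <= 1).
Hypotheses (hG : concave01_ext G) (G0 : G 0 = 0%E)
  (Gfin : forall s, 0 < s < 1 -> G s \is a fin_num) (G1 : G 1 = -oo%E).
Hypothesis fG : forall x, D x -> (f x <= G (q x))%E.

Local Notation mean := (\int[mu]_(x in D) (q x)%:E)%E.

(* Mean 0: q vanishes a.e. on D, and f <= G 0 = 0 wherever q does. *)
Lemma jensen_mean0 : fine mean = 0 -> (\int[mu]_(x in D) f x <= 0)%E.
Proof.
move=> mean0.
have q0 : ae_eq mu D (EFin \o q) (cst 0%E).
  apply: ae_zero_of_integral0 => //; first by move=> x /q01/andP[].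
  by rewrite (proj2 (mean_unit mD muD q01)) mean0.
pose g x := ((q x)%:E * +oo)%E.
have le_fg : (\int[mu]_(x in D) f x <= \int[mu]_(x in D) g x)%E.
  apply: le_integral_pointwise => x Dx; have [qx0|qx_ne0] := eqVneq (q x) 0.
    by rewrite /g qx0 mul0e -G0 -qx0 fG.
  have qx_pos : 0 < q x by rewrite lt_neqAle eq_sym qx_ne0; case/andP: (q01 Dx).
  by rewrite /g gt0_muley ?lte_fin ?leey.
apply: (le_trans le_fg).
rewrite (ae_eq_integral (cst 0%E)) //.
- by rewrite integral0.
- by apply: emeasurable_funM; [exact/measurable_EFinP | exact: measurable_cst].
- by apply: filterS q0 => x q0x Dx; move: (q0x Dx); rewrite /g /= => ->; rewrite mul0e.
Qed.

(* Mean 1: q = 1 a.e. on D, so f = G 1 = -oo on a set of full measure. *)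
Lemma jensen_mean1 : fine mean = 1 -> (\int[mu]_(x in D) f x = -oo)%E.
Proof.
move=> mean1.
have q1 : ae_eq mu D (EFin \o (fun x => 1 + -1 * q x)) (cst 0%E).
  apply: ae_zero_of_integral0 => //.
  - by apply: measurable_funD; [exact: measurable_cst | exact: measurable_funM].
  - by move=> x /q01/andP[_ q1]; rewrite mulN1r subr_ge0.
  - by rewrite (integral_affine mD muD mq q01) mean1 mulN1r subrr.
pose E := D `&` q @^-1` [set 1].
have mE : measurable E by apply: mq => //; exact: measurable_set1.
pose h x := ((\1_E x : R)%:E * +oo)%E.
have int_h : (\int[mu]_(x in D) h x = +oo)%E.
  rewrite (ae_eq_integral (cst +oo%E)) //.
  - exact: integral_cst_unit.
  - apply: emeasurable_funM; last exact: measurable_cst.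
    by apply/measurable_EFinP; exact: measurable_indic.
  - apply: filterS q1 => x qx1 Dx; move: (qx1 Dx) => /= -[/eqP].
    rewrite mulN1r subr_eq0 eq_sym => /eqP qx.
    by rewrite /h indicE mem_set // mul1e.
have neg_part : (\int[mu]_(x in D) f^\- x = +oo)%E.
  apply/eqP; rewrite -leye_eq -int_h; apply: le_integral_pointwise => x Dx.
  rewrite /h indicE; have [xE|xE] := boolP (x \in E); last by rewrite mul0e funeneg_ge0.
  have fx : f x = -oo%E.
    by apply/eqP; rewrite -leeNy_eq -G1; move/set_mem: xE => [_ <-]; exact: fG.
  by rewrite mul1e funenegE fx /= le_max lexx.
by rewrite integralE neg_part addeNy.
Qed.

(* Mean in ]0, 1[: integrate a supporting line of G at the mean. *)
Lemma jensen_interior : 0 < fine mean < 1 -> (\int[mu]_(x in D) f x <= G (fine mean))%E.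
Proof.
move=> mean01; have [c hc] := concave01_ext_support hG G0 Gfin G1 mean01.
have GrE : G (fine mean) = (fine (G (fine mean)))%:E by rewrite fineK // Gfin.
pose line x := fine (G (fine mean)) - c * fine mean + c * q x.
have le_f_line : (\int[mu]_(x in D) f x <= \int[mu]_(x in D) (line x)%:E)%E.
  apply: le_integral_pointwise => x Dx; apply: le_trans (fG Dx) _.
  by apply: le_trans (hc _ (q01 Dx)) _; rewrite lee_fin /line mulrBr; lra.
apply: (le_trans le_f_line).
by rewrite (integral_affine mD muD mq q01) GrE lee_fin; lra.
Qed.

Theorem jensen_concave01 : (\int[mu]_(x in D) f x <= G (fine mean))%E.
Proof.
have [/andP[mean_ge0 mean_le1] _] := mean_unit mD muD q01.
have [mean0|ne0] := eqVneq (fine mean) 0; first by rewrite mean0 G0 jensen_mean0.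
have [mean1|ne1] := eqVneq (fine mean) 1; first by rewrite jensen_mean1 // leNye.
by apply: jensen_interior; rewrite !lt_neqAle eq_sym ne0 ne1 mean_ge0 mean_le1.
Qed.

End jensen_concave01.

Section derivative_distributions.
Context d (T : measurableType d) (R : realType) (P : probability T R).
Variable V : T -> R -> R.
Hypothesis hV : {ae P, forall w, good_valuation (V w)}.
Hypothesis mV : forall x, 0 <= x <= 1 -> measurable_fun setT (fun w => deriv01 (V w) x).

(* Almost surely v'(x) <= v'(0), hence F_0 <= F_x and F_x^{-1} <= F_0^{-1}. *)
Lemma quantile_Fder_le x s : 0 <= x <= 1 ->
  (quantile (Fder P V x) s <= quantile (Fder P V 0) s)%E.
Proof.
move=> /[dup] x01 /andP[x0 x1]; apply: quantile_antitone => t.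
apply: cdfR_le_ae; [exact: mV | by apply: mV; rewrite lexx ler01 |].
by apply: filterS hV => w [_ [_ [hc hd]]]; exact: deriv01_antitone.
Qed.

End derivative_distributions.

Unset Implicit Arguments.

Theorem mainTheorem11 (R : realType) (d : measure_display)
  (T : measurableType d) (P : probability T R) (V : T -> R -> R) (kappa : R)
  (q : R -> R) :
  1 <= kappa ->
  {ae P, forall w, good_valuation (V w)} ->
  (forall x, 0 <= x <= 1 -> measurable_fun setT (fun w => deriv01 (V w) x)) ->
  regular (Fder P V 0) ->
  measurable_fun (`[0%R, 1%R] : set R) q ->
  (forall x, 0 <= x <= 1 -> 0 <= q x <= 1) ->
  let r := (\int[@lebesgue_measure R]_(x in (`[0%R, 1%R] : set R)) (q x)%:E)%E in
  let H := fun t => Fder P V 0 (2 * kappa * t) in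
  (\int[@lebesgue_measure R]_(x in (`[0%R, 1%R] : set R))
      ((q x)%:E * quantile (Fder P V x) (1 - q x)) <=
     r * quantile (Fder P V 0) (1 - fine r))%E /\
  (r * quantile (Fder P V 0) (1 - fine r) =
     (2 * kappa)%:E * (r * quantile H (1 - fine r)))%E.
Proof.
move=> kappa1 hV mV hreg mq hq r H.
split; last first.
  rewrite {1}(@quantile_scale _ _ (2 * kappa)); last lra.
  by rewrite muleCA.
have D01 x : (`[0%R, 1%R]%classic : set R) x -> 0 <= x <= 1 by rewrite /= in_itv.
have q01 x : (`[0%R, 1%R]%classic : set R) x -> 0 <= q x <= 1 by move/D01; exact: hq.
have leb01 : lebesgue_measure (`[0%R, 1%R]%classic : set R) = 1%E.
  by rewrite lebesgue_measure_itv /= lte_fin ltr01 -EFinB subr0.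
have mF0 : measurable_fun setT (fun w => deriv01 (V w) 0) by apply: mV; rewrite lexx ler01.
(* r = G (fine r) for G s := s F_0^{-1}(1 - s); apply Jensen to G and check
   its hypotheses: G 0 = 0, G finite on ]0, 1[, G 1 = -oo, and the pointwise
   bound of the integrand by G (q x). *)
rewrite /r {1}(proj2 (mean_unit (mu := @lebesgue_measure R) (measurable_itv _) leb01 q01)).
apply: (jensen_concave01 (mu := @lebesgue_measure R) (measurable_itv _) leb01 mq q01 hreg).
- by rewrite mul0e.
- move=> s /andP[s0 s1]; rewrite fin_numM //.
  by apply: (quantile_cdfR_fin_num P mF0); apply/andP; split; lra.
- by rewrite mul1e subrr quantile0 // => t; exact: cdfR_ge0.
- move=> x Dx; apply: lee_wpmul2l; first by have /andP[q0 _] := q01 x Dx.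
  exact/quantile_Fder_le/D01.
Qed.
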